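(* Let $K=\{p\in\mathbb{R}^3:0\le p_3\le\theta(p_1,p_2)\}$, let $p\in\mathbb{R}^3$ and suppose its Euclidean projection onto $K$ is of the form $p^{pr}=(p^{pr}_1,p^{pr}_2,\theta(p^{pr}_1,p^{pr}_2))$ with $(p^{pr}_1,p^{pr}_2)\in(0,\infty)^2$. For $q>0$ let $w(q)=(q^{1/2},q^{-1/2},\theta(q^{1/2},q^{-1/2}))$ and $n(q)=(-\partial_1\theta(q^{1/2},q^{-1/2}),-\partial_2\theta(q^{1/2},q^{-1/2}),1)$. Then there is a unique $(q,\tau)\in(0,\infty)^2$ with $p^{pr}=\tau\,w(q)$; this $q$ is the unique root of $q\mapsto\langle p,w(q)\times n(q)\rangle$ and $\tau=\langle p,w(q)/\|w(q)\|^2\rangle$.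
   Context: $\theta:[0,\infty)^2\to[0,\infty)$ is continuous, concave, 1-homogeneous, symmetric, $C^\infty$ on $(0,\infty)^2$, with $\theta(0,s)=\theta(s,0)=0$, $\theta(s,s)=s$, $\theta(s,t)>0$ for $s,t>0$, and nondecreasing in each argument; $\theta(s,t)=-\infty$ if $\min\{s,t\}<0$. $\times$ denotes the cross product in $\mathbb{R}^3$ and $\langle\cdot,\cdot\rangle$, $\|\cdot\|$ the Euclidean inner product and norm. *)

From Stdlib Require Import Reals Lra List.
From Coquelicot Require Import Coquelicot.
Open Scope R_scope.

Definition vec3 := (R * R * R)%type.
Definition v1 (v : vec3) : R := fst (fst v).
Definition v2 (v : vec3) : R := snd (fst v).
Definition v3 (v : vec3) : R := snd v.

Definition dot3 (u v : vec3) : R := v1 u * v1 v + v2 u * v2 v + v3 u * v3 v.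
Definition norm3 (u : vec3) : R := sqrt (dot3 u u).
Definition cross3 (u v : vec3) : vec3 :=
  (v2 u * v3 v - v3 u * v2 v, v3 u * v1 v - v1 u * v3 v, v1 u * v2 v - v2 u * v1 v).
Definition scal3 (a : R) (u : vec3) : vec3 := (a * v1 u, a * v2 u, a * v3 u).
Definition sub3 (u v : vec3) : vec3 := (v1 u - v1 v, v2 u - v2 v, v3 u - v3 v).

Definition quad (s t : R) : Prop := 0 <= s /\ 0 <= t.
Definition oquad (s t : R) : Prop := 0 < s /\ 0 < t.

Definition d1 (f : R -> R -> R) : R -> R -> R := fun s t => Derive (fun x => f x t) s.
Definition d2 (f : R -> R -> R) : R -> R -> R := fun s t => Derive (fun y => f s y) t.

Fixpoint dpart (l : list bool) (f : R -> R -> R) : R -> R -> R :=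
  match l with
  | nil => f
  | b :: l' => if b then d2 (dpart l' f) else d1 (dpart l' f)
  end.

Definition cont_within (D : R -> R -> Prop) (f : R -> R -> R) (s t : R) : Prop :=
  forall eps, 0 < eps -> exists delta, 0 < delta /\
    forall s' t', D s' t' -> Rabs (s' - s) < delta -> Rabs (t' - t) < delta ->
      Rabs (f s' t' - f s t) < eps.

Definition smooth_oquad (f : R -> R -> R) : Prop :=
  forall (l : list bool) s t, oquad s t ->
    ex_derive (fun x => dpart l f x t) s /\
    ex_derive (fun y => dpart l f s y) t /\
    cont_within oquad (dpart l f) s t.

(* Standing assumptions on theta (theta only matters on [0,oo)^2; its value
   -oo outside is encoded by the constraint p1,p2 >= 0 in the set K). *)
Definition theta_hyp (th : R -> R -> R) : Prop :=
  (forall s t, quad s t -> cont_within quad th s t) /\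
  (forall s t s' t' lam, quad s t -> quad s' t' -> 0 <= lam <= 1 ->
     lam * th s t + (1 - lam) * th s' t'
       <= th (lam * s + (1 - lam) * s') (lam * t + (1 - lam) * t')) /\
  (forall lam s t, 0 <= lam -> quad s t -> th (lam * s) (lam * t) = lam * th s t) /\
  (forall s t, quad s t -> th s t = th t s) /\
  smooth_oquad th /\
  (forall s, 0 <= s -> th 0 s = 0 /\ th s 0 = 0) /\
  (forall s, 0 <= s -> th s s = s) /\
  (forall s t, oquad s t -> 0 < th s t) /\
  (forall s s' t, 0 <= s -> s <= s' -> 0 <= t -> th s t <= th s' t) /\
  (forall s t t', 0 <= s -> 0 <= t -> t <= t' -> th s t <= th s t').

Definition inK (th : R -> R -> R) (p : vec3) : Prop :=
  0 <= v1 p /\ 0 <= v2 p /\ 0 <= v3 p /\ v3 p <= th (v1 p) (v2 p).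

Definition is_proj (th : R -> R -> R) (p x : vec3) : Prop :=
  inK th x /\ forall y, inK th y -> norm3 (sub3 p x) <= norm3 (sub3 p y).

Definition wq (th : R -> R -> R) (q : R) : vec3 :=
  (sqrt q, / sqrt q, th (sqrt q) (/ sqrt q)).
Definition nq (th : R -> R -> R) (q : R) : vec3 :=
  (- d1 th (sqrt q) (/ sqrt q), - d2 th (sqrt q) (/ sqrt q), 1).

From Pilot Require Import Defs.
From Stdlib Require Import Reals Lra Psatz.
From Coquelicot Require Import Coquelicot.
Open Scope R_scope.

(* At the projection pp = (a, b, theta(a, b)) the first-order conditions give
   p = pp + lam n(a, b) with lam >= 0.  By 1-homogeneity of theta, pp = tau w(q)
   with q = a/b and tau = sqrt(ab), and the partial derivatives are
   0-homogeneous, so n(a, b) = n(q); Euler's identity makes w(q) orthogonal to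
   n(q), which yields the root and the formula for tau.  If p also lies in the
   plane spanned by w(q') and n(q'), write p = al w(q') + be n(q').  Concavity
   (theta lies below its tangent planes) gives <w(q), n(q')> <= 0 and
   <w(q'), n(q)> <= 0; these force al > 0, be >= 0 and then
   |tau w(q) - al w(q')|^2 <= 0, so w(q) and w(q') are proportional and q' = q. *)

Lemma is_derive_nonneg_of_right_min (f : R -> R) (x l r : R) :
  0 < r -> (forall k, 0 < k < r -> f x <= f (x + k)) -> is_derive f x l -> 0 <= l.
Proof.
  intros Hr Hmin Hd. apply is_derive_Reals in Hd.
  destruct (Rle_or_lt 0 l) as [|Hl]; [assumption | exfalso].
  destruct (Hd (- l)) as [d Hdl]; [lra|].
  set (k := Rmin d r / 2).
  assert (Hk : 0 < k < r /\ k < d).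
  { pose proof (cond_pos d). pose proof (Rmin_l d r). pose proof (Rmin_r d r).
    assert (0 < Rmin d r) by (apply Rmin_case; lra). unfold k; lra. }
  assert (Hq : 0 <= (f (x + k) - f x) / k).
  { apply Rdiv_le_0_compat; [pose proof (Hmin k (proj1 Hk)) |]; lra. }
  specialize (Hdl k ltac:(lra) ltac:(rewrite Rabs_pos_eq; lra)).
  apply Rabs_def2 in Hdl. lra.
Qed.

Lemma is_derive_eq0_of_local_min (f : R -> R) (x l r : R) :
  0 < r -> (forall k, Rabs k < r -> f x <= f (x + k)) -> is_derive f x l -> l = 0.
Proof.
  intros Hr Hmin Hd.
  assert (0 <= l).
  { apply (is_derive_nonneg_of_right_min f x l r Hr); [|exact Hd].
    intros k Hk. apply Hmin. rewrite Rabs_pos_eq; lra. }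
  assert (0 <= - l).
  { apply (is_derive_nonneg_of_right_min (fun y => f (x - y)) 0 (- l) r Hr).
    - intros k Hk. cbv beta. rewrite Rminus_0_r.
      replace (x - (0 + k)) with (x + - k) by ring.
      apply Hmin. rewrite Rabs_Ropp, Rabs_pos_eq; lra.
    - auto_derive; replace (x + - 0) with x by ring.
      + exists l. exact Hd.
      + replace (Derive (fun z => f z) x) with l
          by (symmetry; apply is_derive_unique, Hd).
        ring. }
  lra.
Qed.

Lemma concave_le_tangent (h : R -> R) (r y l : R) :
  (forall x z lam, 0 < x -> 0 < z -> 0 <= lam <= 1 ->
     lam * h x + (1 - lam) * h z <= h (lam * x + (1 - lam) * z)) ->
  0 < r -> 0 < y -> is_derive h r l -> h y <= h r + l * (y - r).
Proof.
  intros Hconc Hr Hy Hd.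
  set (g := fun k => h (r + k * (y - r)) - k * (h y - h r)).
  assert (Hg : is_derive g 0 (l * (y - r) - (h y - h r))).
  { unfold g. auto_derive.
    - replace (r + 0 * (y - r)) with r by ring. exists l. exact Hd.
    - replace (r + 0 * (y - r)) with r by ring.
      replace (Derive (fun z => h z) r) with l
        by (symmetry; apply is_derive_unique, Hd).
      ring. }
  enough (0 <= l * (y - r) - (h y - h r)) by lra.
  apply (is_derive_nonneg_of_right_min g 0 _ 1 Rlt_0_1); [|exact Hg].
  intros k Hk. unfold g. rewrite Rplus_0_l, Rmult_0_l, Rplus_0_r, Rmult_0_l, Rminus_0_r.
  pose proof (Hconc y r k Hy Hr ltac:(lra)) as Hc.
  replace (k * y + (1 - k) * r) with (r + k * (y - r)) in Hc by ring. lra.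
Qed.

Lemma nonneg_of_pos_affine (a b : R) : (forall x, 0 < x -> 0 < x * a + b) -> 0 <= a.
Proof.
  intros H. destruct (Rle_or_lt 0 a) as [|Ha]; [assumption | exfalso].
  pose proof (Rabs_pos b). pose proof (Rle_abs b).
  specialize (H ((Rabs b + 1) / - a) ltac:(apply Rdiv_lt_0_compat; lra)).
  replace ((Rabs b + 1) / - a * a) with (- (Rabs b + 1)) in H by (field; lra).
  lra.
Qed.

Lemma sqrt_mul_sqrt_div (a b : R) : 0 < a -> 0 < b ->
  sqrt (a * b) * sqrt (a / b) = a /\ sqrt (a * b) * / sqrt (a / b) = b.
Proof.
  intros Ha Hb.
  assert (Hab : 0 <= a * b) by nra.
  assert (Hdiv : 0 < a / b) by (apply Rdiv_lt_0_compat; lra).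
  split.
  - rewrite <- sqrt_mult by lra. replace (a * b * (a / b)) with (a * a) by (field; lra).
    apply sqrt_square; lra.
  - rewrite <- sqrt_inv, <- sqrt_mult by (try apply Rlt_le, Rinv_0_lt_compat; lra).
    replace (a * b * / (a / b)) with (b * b) by (field; lra).
    apply sqrt_square; lra.
Qed.

Definition add3 (u v : vec3) : vec3 := (v1 u + v1 v, v2 u + v2 v, v3 u + v3 v).

Ltac vec3_unfold :=
  repeat match goal with u : vec3 |- _ => destruct u as [[? ?] ?] end;
  unfold add3, scal3, sub3, cross3, dot3, v1, v2, v3 in *; cbn in *.

Lemma dot3_comm (u v : vec3) : dot3 u v = dot3 v u.
Proof. vec3_unfold; ring. Qed.

Lemma dot3_scall (a : R) (u v : vec3) : dot3 (scal3 a u) v = a * dot3 u v.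
Proof. vec3_unfold; ring. Qed.

Lemma dot3_scalr (a : R) (u v : vec3) : dot3 u (scal3 a v) = a * dot3 u v.
Proof. vec3_unfold; ring. Qed.

Lemma dot3_cross_l (u v : vec3) : dot3 u (cross3 u v) = 0.
Proof. vec3_unfold; ring. Qed.

Lemma dot3_cross_r (u v : vec3) : dot3 v (cross3 u v) = 0.
Proof. vec3_unfold; ring. Qed.

Lemma dot3_self_ge0 (u : vec3) : 0 <= dot3 u u.
Proof. vec3_unfold; nra. Qed.

Lemma dot3_self_gt0 (u : vec3) : v3 u <> 0 -> 0 < dot3 u u.
Proof. vec3_unfold; intros; nra. Qed.

Lemma dot3_self_le0 (u : vec3) : dot3 u u <= 0 -> u = (0, 0, 0).
Proof. vec3_unfold; intros; f_equal; [f_equal|]; nra. Qed.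

Lemma norm3_sqr (u : vec3) : norm3 u ^ 2 = dot3 u u.
Proof. apply pow2_sqrt, dot3_self_ge0. Qed.

Lemma gram_expansion (u v p : vec3) :
  scal3 (dot3 u u * dot3 v v - dot3 u v ^ 2) p =
  add3 (add3 (scal3 (dot3 p u * dot3 v v - dot3 p v * dot3 u v) u)
             (scal3 (dot3 p v * dot3 u u - dot3 p u * dot3 u v) v))
       (scal3 (dot3 p (cross3 u v)) (cross3 u v)).
Proof. vec3_unfold; f_equal; [f_equal|]; ring. Qed.

Lemma span_of_dot3_cross3_eq0 (u v p : vec3) :
  dot3 u v = 0 -> 0 < dot3 u u -> 0 < dot3 v v -> dot3 p (cross3 u v) = 0 ->
  p = add3 (scal3 (dot3 p u / dot3 u u) u) (scal3 (dot3 p v / dot3 v v) v).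
Proof.
  intros Huv Hu Hv Hp. pose proof (gram_expansion u v p) as E.
  rewrite Huv, Hp in E.
  set (uu := dot3 u u) in *; set (vv := dot3 v v) in *;
  set (pu := dot3 p u) in *; set (pv := dot3 p v) in *; clearbody uu vv pu pv.
  replace p with (scal3 (/ (uu * vv - 0 ^ 2)) (scal3 (uu * vv - 0 ^ 2) p))
    by (vec3_unfold; f_equal; [f_equal|]; field; split; lra).
  rewrite E. vec3_unfold; f_equal; [f_equal|]; field; split; lra.
Qed.

Lemma dot3_lincomb_l (a b : R) (u v w : vec3) :
  dot3 (add3 (scal3 a u) (scal3 b v)) w = a * dot3 u w + b * dot3 v w.
Proof. vec3_unfold; ring. Qed.

Lemma dot3_sub3_self (u v : vec3) :
  dot3 (sub3 u v) (sub3 u v) = dot3 u u - 2 * dot3 u v + dot3 v v.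
Proof. vec3_unfold; ring. Qed.

Lemma sub3_eq0 (u v : vec3) : sub3 u v = (0, 0, 0) -> u = v.
Proof. vec3_unfold; intros E; injection E as E1 E2 E3; f_equal; [f_equal|]; lra. Qed.

Section OrthogonalCones.

Variables (w n u v : vec3) (tau lam al be : R).
Hypotheses (Hwn : dot3 w n = 0) (Huv : dot3 u v = 0)
  (Hwv : dot3 w v <= 0) (Hun : dot3 u n <= 0).
Hypotheses (Htau : 0 < tau) (Hlam : 0 <= lam).
Hypothesis Hp : add3 (scal3 tau w) (scal3 lam n) = add3 (scal3 al u) (scal3 be v).

Lemma orthogonal_cones_coef_sign :
  0 <= dot3 w u -> 0 < dot3 v n ->
  0 < v3 w -> 0 <= v3 n -> 0 < v3 u -> 0 < v3 v -> 0 < al /\ 0 <= be.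
Proof.
  intros Hwu Hvn Hw3 Hn3 Hu3 Hv3.
  assert (Pn : 0 <= al * dot3 u n + be * dot3 v n).
  { rewrite <- dot3_lincomb_l, <- Hp, dot3_lincomb_l, Hwn.
    pose proof (dot3_self_ge0 n). nra. }
  assert (Pw : 0 < al * dot3 u w + be * dot3 v w).
  { rewrite <- dot3_lincomb_l, <- Hp, dot3_lincomb_l, (dot3_comm n w), Hwn.
    pose proof (dot3_self_gt0 w ltac:(lra)). nra. }
  assert (P3 : 0 < al * v3 u + be * v3 v).
  { apply (f_equal v3) in Hp. unfold add3, scal3 in Hp; simpl in Hp. rewrite <- Hp.
    pose proof (Rmult_lt_0_compat tau (v3 w) Htau Hw3).
    pose proof (Rmult_le_pos lam (v3 n) Hlam Hn3). lra. }
  rewrite dot3_comm in Hwu, Hwv.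
  assert (Hbe : 0 <= be).
  { destruct (Rle_or_lt 0 be) as [|Hbe]; [assumption | exfalso].
    destruct (Rle_or_lt 0 al) as [Hal | Hal].
    - assert (al * dot3 u n <= 0)
        by (rewrite <- (Rmult_0_r al); apply Rmult_le_compat_l; lra).
      pose proof (Rmult_neg_pos be (dot3 v n) Hbe Hvn). lra.
    - pose proof (Rmult_neg_pos al (v3 u) Hal Hu3).
      pose proof (Rmult_neg_pos be (v3 v) Hbe Hv3). lra. }
  split; [|exact Hbe].
  destruct (Rle_or_lt al 0) as [Hal | Hal]; [exfalso | exact Hal].
  assert (al * dot3 u w <= 0)
    by (rewrite <- (Rmult_0_l (dot3 u w)); apply Rmult_le_compat_r; lra).
  assert (be * dot3 v w <= 0)
    by (rewrite <- (Rmult_0_r be); apply Rmult_le_compat_l; lra).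
  lra.
Qed.

(* |tau w - al u|^2 = tau be (w.v) + al lam (n.u) <= 0, computing tau w.w and
   al u.u from the two expressions of p.w and p.u. *)
Lemma orthogonal_cones_eq : 0 <= al -> 0 <= be -> scal3 tau w = scal3 al u.
Proof.
  intros Hal Hbe.
  pose proof (f_equal (fun x => dot3 x w) Hp) as Hpw.
  pose proof (f_equal (fun x => dot3 x u) Hp) as Hpu.
  cbv beta in Hpw, Hpu. rewrite !dot3_lincomb_l in Hpw, Hpu.
  rewrite (dot3_comm n w), Hwn in Hpw. rewrite (dot3_comm v u), Huv in Hpu.
  rewrite (dot3_comm u w), (dot3_comm v w) in Hpw.
  apply sub3_eq0, dot3_self_le0.
  rewrite dot3_sub3_self, !dot3_scall, !dot3_scalr.
  replace (tau * (tau * dot3 w w)) with (tau * (al * dot3 w u + be * dot3 w v))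
    by (rewrite <- Hpw; ring).
  replace (al * (al * dot3 u u)) with (al * (tau * dot3 w u + lam * dot3 n u))
    by (rewrite Hpu; ring).
  assert (tau * be * dot3 w v <= 0).
  { rewrite <- (Rmult_0_r (tau * be)). apply Rmult_le_compat_l; [|lra].
    apply Rmult_le_pos; lra. }
  assert (al * lam * dot3 n u <= 0).
  { rewrite <- (Rmult_0_r (al * lam)), dot3_comm. apply Rmult_le_compat_l; [|lra].
    apply Rmult_le_pos; lra. }
  lra.
Qed.

End OrthogonalCones.

Lemma collinear_of_dot3_cross3_eq0 (w n u v : vec3) (tau lam : R) :
  dot3 w n = 0 -> dot3 u v = 0 -> dot3 w v <= 0 -> dot3 u n <= 0 ->
  0 <= dot3 w u -> 0 < dot3 v n ->
  0 < v3 w -> 0 <= v3 n -> 0 < v3 u -> 0 < v3 v -> 0 < tau -> 0 <= lam ->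
  dot3 (add3 (scal3 tau w) (scal3 lam n)) (cross3 u v) = 0 ->
  exists al, 0 < al /\ scal3 tau w = scal3 al u.
Proof.
  intros Hwn Huv Hwv Hun Hwu Hvn Hw3 Hn3 Hu3 Hv3 Htau Hlam Hcross.
  set (p := add3 (scal3 tau w) (scal3 lam n)) in Hcross.
  pose proof (span_of_dot3_cross3_eq0 u v p Huv (dot3_self_gt0 u ltac:(lra))
                (dot3_self_gt0 v ltac:(lra)) Hcross) as Hspan.
  set (al := dot3 p u / dot3 u u) in Hspan; set (be := dot3 p v / dot3 v v) in Hspan.
  destruct (orthogonal_cones_coef_sign w n u v tau lam al be) as [Hal Hbe]; auto.
  exists al. split; [exact Hal|].
  apply (orthogonal_cones_eq w n u v tau lam al be); auto; lra.
Qed.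

Definition profile (th : R -> R -> R) (x : R) : R := th x 1.
Definition graph_point (th : R -> R -> R) (s t : R) : vec3 := (s, t, th s t).
Definition graph_normal (th : R -> R -> R) (s t : R) : vec3 :=
  (- Defs.d1 th s t, - Defs.d2 th s t, 1).

Section Theta.

Variable th : R -> R -> R.
Hypothesis Hth : theta_hyp th.

Lemma theta_homog (k s t : R) : 0 <= k -> 0 <= s -> 0 <= t ->
  th (k * s) (k * t) = k * th s t.
Proof.
  intros Hk Hs Ht. destruct Hth as (_ & _ & Hh & _). apply Hh; [|split]; assumption.
Qed.

Lemma theta_pos (s t : R) : 0 < s -> 0 < t -> 0 < th s t.
Proof.
  intros Hs Ht. destruct Hth as (_ & _ & _ & _ & _ & _ & _ & Hp & _).
  apply Hp. split; assumption.
Qed.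

Lemma theta_ex_derive1 (s t : R) : 0 < s -> 0 < t -> ex_derive (fun x => th x t) s.
Proof.
  intros Hs Ht. destruct Hth as (_ & _ & _ & _ & Hsm & _).
  exact (proj1 (Hsm nil s t (conj Hs Ht))).
Qed.

Lemma theta_ex_derive2 (s t : R) : 0 < s -> 0 < t -> ex_derive (fun y => th s y) t.
Proof.
  intros Hs Ht. destruct Hth as (_ & _ & _ & _ & Hsm & _).
  exact (proj1 (proj2 (Hsm nil s t (conj Hs Ht)))).
Qed.

Lemma theta_eq_profile (s t : R) : 0 <= s -> 0 < t -> th s t = t * profile th (s / t).
Proof.
  intros Hs Ht. unfold profile. rewrite <- theta_homog; try lra.
  - f_equal; field; lra.
  - apply Rdiv_le_0_compat; lra.
Qed.

Lemma profile_concave (x z lam : R) : 0 < x -> 0 < z -> 0 <= lam <= 1 ->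
  lam * profile th x + (1 - lam) * profile th z <= profile th (lam * x + (1 - lam) * z).
Proof.
  intros Hx Hz Hlam. destruct Hth as (_ & Hconc & _). unfold profile.
  pose proof (Hconc x 1 z 1 lam ltac:(split; lra) ltac:(split; lra) Hlam) as H.
  replace (lam * 1 + (1 - lam) * 1) with 1 in H by ring. exact H.
Qed.

Lemma d1_theta_eq (s t : R) : 0 < s -> 0 < t ->
  Defs.d1 th s t = Derive (profile th) (s / t).
Proof.
  intros Hs Ht. unfold Defs.d1.
  rewrite (Derive_ext_loc _ (fun x => t * profile th (x / t))).
  2:{ apply locally_interval with 0 p_infty; [exact Hs | exact I |].
      intros x Hx _. simpl in Hx. apply theta_eq_profile; lra. }
  apply is_derive_unique. auto_derive.
  - apply theta_ex_derive1; [apply Rdiv_lt_0_compat|]; lra.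
  - change (Derive (fun x => profile th x) (s * / t)) with (Derive (profile th) (s / t)).
    field. lra.
Qed.

Lemma d2_theta_eq (s t : R) : 0 < s -> 0 < t ->
  Defs.d2 th s t = profile th (s / t) - s / t * Derive (profile th) (s / t).
Proof.
  intros Hs Ht. unfold Defs.d2.
  rewrite (Derive_ext_loc _ (fun y => y * profile th (s / y))).
  2:{ apply locally_interval with 0 p_infty; [exact Ht | exact I |].
      intros y Hy _. simpl in Hy. apply theta_eq_profile; lra. }
  apply is_derive_unique. auto_derive.
  - repeat split; try lra. apply theta_ex_derive1; [apply Rdiv_lt_0_compat|]; lra.
  - change (Derive (fun x => profile th x) (s * / t)) with (Derive (profile th) (s / t)).
    change (profile th (s * / t)) with (profile th (s / t)). field. lra.
Qed.

Lemma theta_euler (s t : R) : 0 < s -> 0 < t ->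
  s * Defs.d1 th s t + t * Defs.d2 th s t = th s t.
Proof.
  intros Hs Ht.
  rewrite d1_theta_eq, d2_theta_eq, (theta_eq_profile s t) by lra. field. lra.
Qed.

Lemma theta_le_tangent (s t s' t' : R) : 0 < s -> 0 < t -> 0 < s' -> 0 < t' ->
  th s' t' <= s' * Defs.d1 th s t + t' * Defs.d2 th s t.
Proof.
  intros Hs Ht Hs' Ht'.
  rewrite d1_theta_eq, d2_theta_eq, (theta_eq_profile s' t') by lra.
  assert (Hr : 0 < s / t) by (apply Rdiv_lt_0_compat; lra).
  assert (Hr' : 0 < s' / t') by (apply Rdiv_lt_0_compat; lra).
  pose proof (concave_le_tangent (profile th) (s / t) (s' / t') _ profile_concave Hr Hr'
                (Derive_correct _ _ (theta_ex_derive1 _ 1 Hr Rlt_0_1))) as Htan.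
  apply Rmult_le_compat_l with (r := t') in Htan; [|lra].
  replace (s' * Derive (profile th) (s / t)
           + t' * (profile th (s / t) - s / t * Derive (profile th) (s / t)))
    with (t' * (profile th (s / t) + Derive (profile th) (s / t) * (s' / t' - s / t)))
    by (field; lra).
  exact Htan.
Qed.

Lemma d1_theta_nonneg (s t : R) : 0 < s -> 0 < t -> 0 <= Defs.d1 th s t.
Proof.
  intros Hs Ht. apply nonneg_of_pos_affine with (t * Defs.d2 th s t).
  intros x Hx. pose proof (theta_le_tangent s t x t Hs Ht Hx Ht).
  pose proof (theta_pos x t Hx Ht). lra.
Qed.

Lemma d2_theta_nonneg (s t : R) : 0 < s -> 0 < t -> 0 <= Defs.d2 th s t.
Proof.
  intros Hs Ht. apply nonneg_of_pos_affine with (s * Defs.d1 th s t).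
  intros y Hy. pose proof (theta_le_tangent s t s y Hs Ht Hs Hy).
  pose proof (theta_pos s y Hs Hy). lra.
Qed.

Lemma graph_point_scale (k s t : R) : 0 <= k -> 0 <= s -> 0 <= t ->
  graph_point th (k * s) (k * t) = scal3 k (graph_point th s t).
Proof. intros Hk Hs Ht. unfold graph_point, scal3; cbn. rewrite theta_homog; auto. Qed.

Lemma graph_normal_scale (k s t : R) : 0 < k -> 0 < s -> 0 < t ->
  graph_normal th (k * s) (k * t) = graph_normal th s t.
Proof.
  intros Hk Hs Ht. assert (E : k * s / (k * t) = s / t) by (field; lra).
  unfold graph_normal.
  rewrite !d1_theta_eq, !d2_theta_eq, E; auto; apply Rmult_lt_0_compat; assumption.
Qed.

Lemma graph_dot_normal (s t : R) : 0 < s -> 0 < t ->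
  dot3 (graph_point th s t) (graph_normal th s t) = 0.
Proof.
  intros Hs Ht. pose proof (theta_euler s t Hs Ht).
  unfold dot3, graph_point, graph_normal, v1, v2, v3; cbn. lra.
Qed.

Lemma graph_dot_normal_nonpos (s t s' t' : R) : 0 < s -> 0 < t -> 0 < s' -> 0 < t' ->
  dot3 (graph_point th s' t') (graph_normal th s t) <= 0.
Proof.
  intros Hs Ht Hs' Ht'. pose proof (theta_le_tangent s t s' t' Hs Ht Hs' Ht').
  unfold dot3, graph_point, graph_normal, v1, v2, v3; cbn. lra.
Qed.

Lemma graph_dot_graph_nonneg (s t s' t' : R) : 0 < s -> 0 < t -> 0 < s' -> 0 < t' ->
  0 <= dot3 (graph_point th s t) (graph_point th s' t').
Proof.
  intros Hs Ht Hs' Ht'.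
  pose proof (theta_pos s t Hs Ht). pose proof (theta_pos s' t' Hs' Ht').
  unfold dot3, graph_point, v1, v2, v3; cbn. nra.
Qed.

Lemma normal_dot_normal_pos (s t s' t' : R) : 0 < s -> 0 < t -> 0 < s' -> 0 < t' ->
  0 < dot3 (graph_normal th s t) (graph_normal th s' t').
Proof.
  intros Hs Ht Hs' Ht'.
  pose proof (d1_theta_nonneg s t Hs Ht). pose proof (d2_theta_nonneg s t Hs Ht).
  pose proof (d1_theta_nonneg s' t' Hs' Ht'). pose proof (d2_theta_nonneg s' t' Hs' Ht').
  unfold dot3, graph_normal, v1, v2, v3; cbn. nra.
Qed.

Lemma collinear_of_normal_plane (s t s' t' tau lam : R) :
  0 < s -> 0 < t -> 0 < s' -> 0 < t' -> 0 < tau -> 0 <= lam ->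
  dot3 (add3 (scal3 tau (graph_point th s t)) (scal3 lam (graph_normal th s t)))
       (cross3 (graph_point th s' t') (graph_normal th s' t')) = 0 ->
  exists al, 0 < al /\ scal3 tau (graph_point th s t) = scal3 al (graph_point th s' t').
Proof.
  intros Hs Ht Hs' Ht' Htau Hlam.
  apply collinear_of_dot3_cross3_eq0;
    auto using graph_dot_normal, graph_dot_normal_nonpos, graph_dot_graph_nonneg,
      normal_dot_normal_pos; unfold v3, graph_point, graph_normal; cbn;
    auto using theta_pos; lra.
Qed.

Lemma is_proj_sqdist_le (p x y : vec3) : is_proj th p x -> inK th y ->
  dot3 (sub3 p x) (sub3 p x) <= dot3 (sub3 p y) (sub3 p y).
Proof.
  intros [_ Hmin] Hy. apply sqrt_le_0; [apply dot3_self_ge0 .. | exact (Hmin y Hy)].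
Qed.

Lemma proj_first_order (p : vec3) (a b : R) : 0 < a -> 0 < b ->
  is_proj th p (graph_point th a b) ->
  exists lam, 0 <= lam /\ p = add3 (graph_point th a b) (scal3 lam (graph_normal th a b)).
Proof.
  intros Ha Hb Hproj. destruct p as [[p1 p2] p3].
  set (dist := fun x y z => (p1 - x) ^ 2 + (p2 - y) ^ 2 + (p3 - z) ^ 2).
  assert (Hmin : forall x y z, 0 <= x -> 0 <= y -> 0 <= z <= th x y ->
                   dist a b (th a b) <= dist x y z).
  { intros x y z Hx Hy Hz.
    pose proof (is_proj_sqdist_le _ _ (x, y, z) Hproj ltac:(repeat split; cbn; lra)) as H.
    unfold dist, dot3, sub3, graph_point, v1, v2, v3 in H |- *; cbn in H. lra. }
  set (lam := p3 - th a b).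
  assert (E1 : -2 * (p1 - a) - 2 * lam * Defs.d1 th a b = 0).
  { apply (is_derive_eq0_of_local_min (fun x => dist x b (th x b)) a _ a Ha).
    - intros k Hk. apply Rabs_def2 in Hk.
      pose proof (theta_pos (a + k) b ltac:(lra) Hb). apply Hmin; lra.
    - unfold dist, lam, Defs.d1. auto_derive; [apply theta_ex_derive1; lra | ring]. }
  assert (E2 : -2 * (p2 - b) - 2 * lam * Defs.d2 th a b = 0).
  { apply (is_derive_eq0_of_local_min (fun y => dist a y (th a y)) b _ b Hb).
    - intros k Hk. apply Rabs_def2 in Hk.
      pose proof (theta_pos a (b + k) Ha ltac:(lra)). apply Hmin; lra.
    - unfold dist, lam, Defs.d2. auto_derive; [apply theta_ex_derive2; lra | ring]. }
  assert (Hlam : 0 <= 2 * lam).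
  { apply (is_derive_nonneg_of_right_min (fun k => dist a b (th a b - k)) 0 _ (th a b)).
    - exact (theta_pos a b Ha Hb).
    - intros k Hk. rewrite Rminus_0_r. apply Hmin; lra.
    - unfold dist, lam. auto_derive; [exact I | ring]. }
  exists lam. split; [lra|].
  unfold add3, scal3, graph_point, graph_normal, v1, v2, v3; cbn.
  f_equal; [f_equal|]; unfold lam in *; lra.
Qed.

Lemma graph_point_eq_scal3_wq (a b : R) : 0 < a -> 0 < b ->
  graph_point th a b = scal3 (sqrt (a * b)) (wq th (a / b)).
Proof.
  intros Ha Hb. destruct (sqrt_mul_sqrt_div a b Ha Hb) as [Ea Eb].
  unfold wq. fold (graph_point th (sqrt (a / b)) (/ sqrt (a / b))).
  rewrite <- graph_point_scale, Ea, Eb; auto.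
  - apply sqrt_pos.
  - apply sqrt_pos.
  - apply Rlt_le, Rinv_0_lt_compat, sqrt_lt_R0, Rdiv_lt_0_compat; lra.
Qed.

Lemma graph_normal_eq_nq (a b : R) : 0 < a -> 0 < b ->
  graph_normal th a b = nq th (a / b).
Proof.
  intros Ha Hb. destruct (sqrt_mul_sqrt_div a b Ha Hb) as [Ea Eb].
  assert (0 < sqrt (a / b)) by (apply sqrt_lt_R0, Rdiv_lt_0_compat; lra).
  unfold nq. fold (graph_normal th (sqrt (a / b)) (/ sqrt (a / b))).
  transitivity (graph_normal th (sqrt (a * b) * sqrt (a / b))
                               (sqrt (a * b) * / sqrt (a / b)));
    [rewrite Ea, Eb; reflexivity | apply graph_normal_scale; auto].
  - apply sqrt_lt_R0; nra.
  - apply Rinv_0_lt_compat; assumption.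
Qed.

End Theta.

Lemma scal3_wq_inj (th : R -> R -> R) (q tau q' tau' : R) :
  0 < q -> 0 < tau -> 0 < q' -> 0 < tau' ->
  scal3 tau (wq th q) = scal3 tau' (wq th q') -> q = q' /\ tau = tau'.
Proof.
  intros Hq Htau Hq' Htau' E.
  unfold scal3, wq, v1, v2, v3 in E; cbn in E. injection E as E1 E2 _.
  assert (Hs : 0 < sqrt q) by (apply sqrt_lt_R0; lra).
  assert (Hs' : 0 < sqrt q') by (apply sqrt_lt_R0; lra).
  assert (Et : tau = tau').
  { assert (tau * tau = tau' * tau').
    { transitivity ((tau * sqrt q) * (tau * / sqrt q)); [field; lra|].
      rewrite E1, E2. field; lra. }
    nra. }
  split; [|exact Et]. subst tau'.
  rewrite <- (sqrt_sqrt q), <- (sqrt_sqrt q') by lra.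
  assert (sqrt q = sqrt q') by (apply Rmult_eq_reg_l with tau; lra).
  congruence.
Qed.

Theorem lemma4p5 (th : R -> R -> R) (p pp : vec3) :
  theta_hyp th ->
  is_proj th p pp ->
  0 < v1 pp -> 0 < v2 pp -> v3 pp = th (v1 pp) (v2 pp) ->
  exists q tau,
    0 < q /\ 0 < tau /\ pp = scal3 tau (wq th q) /\
    (forall q' tau', 0 < q' -> 0 < tau' -> pp = scal3 tau' (wq th q') ->
       q' = q /\ tau' = tau) /\
    dot3 p (cross3 (wq th q) (nq th q)) = 0 /\
    (forall q', 0 < q' -> dot3 p (cross3 (wq th q') (nq th q')) = 0 -> q' = q) /\
    tau = dot3 p (scal3 (/ (norm3 (wq th q)) ^ 2) (wq th q)).
Proof.
  intros Hth Hproj Ha Hb Hc.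
  destruct pp as [[a b] c]; unfold v1, v2, v3 in Ha, Hb, Hc; cbn in Ha, Hb, Hc; subst c.
  change (a, b, th a b) with (graph_point th a b) in *.
  destruct (proj_first_order th Hth p a b Ha Hb Hproj) as [lam [Hlam Hp]].
  rewrite graph_point_eq_scal3_wq, graph_normal_eq_nq in * by assumption.
  set (q := a / b) in *; set (tau := sqrt (a * b)) in *.
  assert (Hq : 0 < q) by (apply Rdiv_lt_0_compat; assumption).
  assert (Htau : 0 < tau) by (apply sqrt_lt_R0; nra).
  assert (Hs : 0 < sqrt q) by (apply sqrt_lt_R0; assumption).
  assert (Hwn : dot3 (wq th q) (nq th q) = 0)
    by (apply (graph_dot_normal th Hth); [|apply Rinv_0_lt_compat]; assumption).
  exists q, tau. do 3 (split; [assumption || reflexivity |]).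
  split; [|split; [|split]].
  - intros q' tau' Hq' Htau' E.
    destruct (scal3_wq_inj th q tau q' tau' Hq Htau Hq' Htau' E); split; congruence.
  - rewrite Hp, dot3_lincomb_l, dot3_cross_l, dot3_cross_r. ring.
  - intros q' Hq' Hcross. rewrite Hp in Hcross.
    assert (Hs' : 0 < sqrt q') by (apply sqrt_lt_R0; assumption).
    destruct (collinear_of_normal_plane th Hth _ _ _ _ tau lam Hs
                (Rinv_0_lt_compat _ Hs) Hs' (Rinv_0_lt_compat _ Hs') Htau Hlam Hcross)
      as [al [Hal E]].
    symmetry. apply (scal3_wq_inj th q tau q' al); assumption.
  - rewrite dot3_scalr, norm3_sqr, Hp, dot3_lincomb_l, (dot3_comm (nq th q)), Hwn.
    assert (0 < dot3 (wq th q) (wq th q)).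
    { apply dot3_self_gt0, Rgt_not_eq, (theta_pos th Hth); [|apply Rinv_0_lt_compat];
        assumption. }
    field. lra.
Qed.
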